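(* Let $d\in\mathbb{N}$ and $K=\mathbb{N}_0^d$ or $K=\mathbb{Z}^d$. Let $(\Omega,\mathcal F,P)$ be a probability space and $(\theta_k)_{k\in K}$ a $d$-parameter semigroup (group, if $K=\mathbb{Z}^d$) of $P$-preserving transformations of $\Omega$. Let $(M,\mathcal B,\mu)$ be a probability space, $\tau:M\to M$ a $\mu$-preserving measurable transformation, and $\kappa:M\to K$ a $\mathcal B$-measurable function. Put $\kappa_n=\sum_{i=0}^{n-1}\kappa\circ\tau^i$ and let $S(t,\omega)=(\tau(t),\theta_{\kappa(t)}\omega)$ on $M\times\Omega$ with the product $\sigma$-algebra $\mathcal B\otimes\mathcal F$ and the product measure $\bar P=\mu\otimes P$. Consider the conditions: (C1) for $\mu$-almost all $t\in M$, $(\theta_k)_{k\in K}$ is weakly mixing along the sequence $(\kappa_n(t))_{n\in\mathbb{N}}$; (C2) $(\theta_k)_{k\in K}$ is strongly mixing with respect to $P$, and for $\mu$-almost all $t\in M$, $\|\kappa_n(t)\|\to\infty$ as $n\to\infty$. Then: (i) If (C1) holds and $\tau$ is ergodic w.r.t. $\mu$, then $S$ is ergodic w.r.t. $\bar P$. (ii) If (C1) holds and $\tau$ is weakly mixing w.r.t. $\mu$, then $S$ is weakly mixing w.r.t. $\bar P$. (iii) If (C2) holds and $\tau$ is strongly mixing w.r.t. $\mu$, then $S$ is strongly mixing w.r.t. $\bar P$.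
   Context: A $d$-parameter semigroup of measure-preserving transformations means: each $\theta_k$ is measurable and preserves $P$, $\theta_0=\mathrm{Id}$ and $\theta_k\circ\theta_l=\theta_{k+l}$ for all $k,l\in K$; for $K=\mathbb{Z}^d$ (group) additionally $\theta_{-k}=\theta_k^{-1}$. $\|\cdot\|$ is the maximum norm on $\mathbb{Z}^d$. One has $S^n(t,\omega)=(\tau^n(t),\theta_{\kappa_n(t)}\omega)$. For a $K$-valued sequence $(k_n)_{n\in\mathbb{N}}$, $(\theta_k)_{k\in K}$ is called weakly mixing along $(k_n)$ w.r.t. $P$ if $\frac1n\sum_{i=0}^{n-1}|P(A\cap\theta_{k_i}^{-1}B)-P(A)P(B)|\to0$ as $n\to\infty$ for all $A,B\in\mathcal F$. $(\theta_k)_{k\in K}$ is strongly mixing w.r.t. $P$ if $P(A\cap\theta_k^{-1}B)\to P(A)P(B)$ as $\|k\|\to\infty$ for all $A,B\in\mathcal F$. *)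

From HB Require Import structures.
From mathcomp Require Import all_boot all_order all_algebra.
From mathcomp Require Import all_classical all_reals all_analysis.
Set Implicit Arguments. Unset Strict Implicit. Unset Printing Implicit Defensive.
Import Order.TTheory GRing.Theory Num.Theory.
Import numFieldNormedType.Exports.
Local Open Scope classical_set_scope.
Local Open Scope ring_scope.

Inductive param := ParN | ParZ.

Definition Kt (p : param) (d : nat) : nmodType :=
  match p with
  | ParN => {ffun 'I_d -> nat}
  | ParZ => {ffun 'I_d -> int}
  end.

Definition knorm (p : param) (d : nat) : Kt p d -> nat :=
  match p with
  | ParN => fun k => (\max_(i < d) (k : {ffun 'I_d -> nat}) i)%N
  | ParZ => fun k => (\max_(i < d) `|(k : {ffun 'I_d -> int}) i|%N)%N
  end.

(* d-parameter semigroup of P-preserving transformations; for K = Z^d the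
   group property theta_{-k} = theta_k^{-1} follows from the semigroup law
   (theta_k o theta_{-k} = theta_0 = Id). *)
Definition measure_preserving d (T : measurableType d) (R : realType)
    (Q : probability T R) (f : T -> T) :=
  measurable_fun setT f /\
  forall A, measurable A -> Q (f @^-1` A) = Q A.

Definition mp_semigroup (K : nmodType) d (T : measurableType d) (R : realType)
    (Q : probability T R) (theta : K -> T -> T) :=
  (forall k, measure_preserving Q (theta k)) /\
  theta 0 = id /\
  (forall k l, theta k \o theta l = theta (k + l)).

Definition ergodic d (T : measurableType d) (R : realType)
    (Q : probability T R) (f : T -> T) :=
  forall A, measurable A -> f @^-1` A = A -> Q A = 0%E \/ Q A = 1%E.

Definition cesaro_dev d (T : measurableType d) (R : realType)
    (Q : probability T R) (g : nat -> T -> T) (A B : set T) (n : nat) : R :=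
  n%:R^-1 * \sum_(i < n)
     `| fine (Q (A `&` g i @^-1` B)) - fine (Q A) * fine (Q B) |.

Definition weakly_mixing d (T : measurableType d) (R : realType)
    (Q : probability T R) (f : T -> T) :=
  forall A B, measurable A -> measurable B ->
    cesaro_dev Q (fun i => iter i f) A B @ \oo --> (0 : R).

Definition strongly_mixing d (T : measurableType d) (R : realType)
    (Q : probability T R) (f : T -> T) :=
  forall A B, measurable A -> measurable B ->
    (fun n => fine (Q (A `&` iter n f @^-1` B))) @ \oo
      --> fine (Q A) * fine (Q B).

Definition weakly_mixing_along (K : Type) d (T : measurableType d)
    (R : realType) (Q : probability T R) (theta : K -> T -> T)
    (ks : nat -> K) :=
  forall A B, measurable A -> measurable B ->
    cesaro_dev Q (fun i => theta (ks i)) A B @ \oo --> (0 : R).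

Definition strongly_mixing_family (K : Type) (norm : K -> nat) d
    (T : measurableType d) (R : realType) (Q : probability T R)
    (theta : K -> T -> T) :=
  forall A B, measurable A -> measurable B ->
  forall eps : R, 0 < eps -> exists N : nat, forall k, (N <= norm k)%N ->
    `| fine (Q (A `&` theta k @^-1` B)) - fine (Q A) * fine (Q B) | < eps.

Definition measurable_discrete d (M : measurableType d) (K : Type)
    (kappa : M -> K) :=
  forall A : set K, measurable (kappa @^-1` A).

Definition kappa_n (K : nmodType) (M : Type) (tau : M -> M) (kappa : M -> K)
    (n : nat) (t : M) : K :=
  \sum_(i < n) kappa (iter i tau t).

Definition skew_product (K : Type) (M W : Type) (tau : M -> M) (kappa : M -> K)
    (theta : K -> W -> W) (x : M * W) : M * W :=
  (tau x.1, theta (kappa x.1) x.2).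

From HB Require Import structures.
From mathcomp Require Import all_boot all_order all_algebra.
From mathcomp Require Import all_classical all_reals all_analysis.
From mathcomp Require Import measurable_realfun.
From mathcomp Require Import ring lra.
Import Order.TTheory GRing.Theory Num.Theory.
Import numFieldNormedType.Exports.
Local Open Scope classical_set_scope.
Local Open Scope ring_scope.
Set Implicit Arguments. Unset Strict Implicit. Unset Printing Implicit Defensive.

(* The iterates of the skew product are S^n (t, w) = (tau^n t, theta_(kappa_n t) w).
   All three properties say that a weighted mean (the value at n, or the Cesaro
   average) of |Pbar (A `&` S^-n B) - Pbar A * Pbar B| tends to 0.  For rectangles
   A = C1 `*` D1 and B = C `*` D, integrating over the first coordinate splits this
   defect into a fiber part, which is an average over t of the mixing defect of theta
   along kappa_n(t) and is handled by dominated convergence, plus P D1 * P D times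
   the mixing defect of tau.  A Dynkin argument in B and then in A extends this to
   all measurable sets.  For ergodicity, the fiber measures a t = P (A_t) of an
   S-invariant set A are tau-invariant, and the Cesaro estimate for the fiber part
   gives int a^2 = int a; hence a is the indicator of the tau-invariant set
   {a > 0}, whose measure Pbar A is 0 or 1. *)
Section WeightedMeans.
Variable R : realType.
Implicit Types (w : nat -> nat -> R) (u v : nat -> R).

Definition wmean w u n := \sum_(i < n.+1) w n i * u i.

Definition subprob_weights w :=
  (forall n i, 0 <= w n i) /\ (forall n, \sum_(i < n.+1) w n i <= 1).

Definition wnull w u := wmean w (fun i => `|u i|) n @[n --> \oo] --> 0.

Section SubprobWeights.
Variable w : nat -> nat -> R.
Hypothesis hw : subprob_weights w.

Lemma wmean_le u v n : (forall i, u i <= v i) -> wmean w u n <= wmean w v n.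
Proof. by move=> uv; apply: ler_sum => i _; apply: ler_wpM2l; [exact: hw.1|]. Qed.

Lemma wmeanD u v n : wmean w (fun i => u i + v i) n = wmean w u n + wmean w v n.
Proof. by rewrite /wmean -big_split; apply: eq_bigr => i _; rewrite mulrDr. Qed.

Lemma wmean_ge0 u n : (forall i, 0 <= u i) -> 0 <= wmean w u n.
Proof. by move=> u0; apply: sumr_ge0 => i _; rewrite mulr_ge0 ?hw.1. Qed.

Lemma wmean_cst_le c n : 0 <= c -> wmean w (fun=> c) n <= c.
Proof. by move=> c0; rewrite /wmean -big_distrl /= ler_piMl ?hw.2 ?sumr_ge0 ?hw.1. Qed.

Lemma wnull_le u v : (forall i, `|u i| <= `|v i|) -> wnull w v -> wnull w u.
Proof.
move=> uv; apply: (squeeze_cvgr _ (cvg_cst 0)); near=> n.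
by rewrite wmean_ge0 ?wmean_le.
Unshelve. all: by end_near.
Qed.

Lemma wnullN u : wnull w u -> wnull w (fun i => - u i).
Proof. by apply: wnull_le => i; rewrite normrN. Qed.

Lemma wnullD u v : wnull w u -> wnull w v -> wnull w (fun i => u i + v i).
Proof.
move=> wu wv; apply: (@wnull_le _ (fun i => `|u i| + `|v i|)) => [i|].
  by rewrite [leRHS]ger0_norm ?ler_normD ?addr_ge0.
rewrite /wnull; under eq_fun do under eq_fun do rewrite ger0_norm ?addr_ge0 //.
by under eq_fun do rewrite wmeanD; rewrite -[0]addr0; exact: cvgD.
Qed.

Lemma wnull_approx u :
  (forall e, 0 < e -> exists2 v, wnull w v & forall i, `|u i| <= `|v i| + e) ->
  wnull w u.
Proof.
move=> approx; apply/cvgr0Pnorm_le => e e0; have e20 : 0 < e / 2 by rewrite divr_gt0.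
have [v wv uv] := approx _ e20; near=> n; rewrite ger0_norm ?wmean_ge0 //.
apply: le_trans (wmean_le n uv) _; rewrite wmeanD [leRHS]splitr lerD //.
  near: n; move/cvgr0Pnorm_le: wv => /(_ _ e20); apply: filterS => n.
  by apply: le_trans; exact: ler_norm.
exact/wmean_cst_le/ltW.
Unshelve. all: by end_near.
Qed.

End SubprobWeights.

Definition wdirac : nat -> nat -> R := fun n i => (i == n)%:R.
Definition wcesaro : nat -> nat -> R := fun n i => (i < n)%:R / n%:R.

Lemma wmean_dirac u n : wmean wdirac u n = u n.
Proof.
rewrite /wmean big_ord_recr /= big1 ?add0r /wdirac ?eqxx ?mul1r // => i _.
by rewrite (ltn_eqF (ltn_ord i)) mul0r.
Qed.

Lemma wmean_cesaro u n : wmean wcesaro u n = n%:R^-1 * \sum_(i < n) u i.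
Proof.
rewrite /wmean big_ord_recr /= /wcesaro ltnn mul0r mul0r addr0 big_distrr /=.
by apply: eq_bigr => i _; rewrite ltn_ord mul1r mulrC.
Qed.

Lemma subprob_wdirac : subprob_weights wdirac.
Proof.
split=> [n i|n]; first by rewrite ler0n.
rewrite big_ord_recr big1 /= => [|i _]; first by rewrite /wdirac eqxx add0r.
by rewrite /wdirac ltn_eqF.
Qed.

Lemma subprob_wcesaro : subprob_weights wcesaro.
Proof.
split=> [n i|n]; first by rewrite divr_ge0.
rewrite big_ord_recr /= /wcesaro ltnn mul0r addr0 -big_distrl /=.
rewrite (eq_bigr (fun=> 1)) => [|i _]; last by rewrite ltn_ord.
rewrite sumr_const card_ord -mulr_natr mul1r.
by case: n => [|n]; rewrite ?mul0r // mulfV.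
Qed.

Lemma wnull_diracP u l : wnull wdirac (fun n => u n - l) <-> u @ \oo --> l.
Proof.
rewrite /wnull; under eq_fun do rewrite wmean_dirac.
by rewrite norm_cvg0P subr_cvg0.
Qed.

Lemma wnull_cesaroP u :
  wnull wcesaro u <-> (fun n => n%:R^-1 * \sum_(i < n) `|u i|) @ \oo --> 0.
Proof. by rewrite /wnull; under eq_fun do rewrite wmean_cesaro. Qed.

Lemma wnull_cesaro_cst c : wnull wcesaro (fun=> c) -> c = 0.
Proof.
move/wnull_cesaroP => c0; apply/normr0_eq0.
suff cc : (fun n => n%:R^-1 * \sum_(i < n) `|c|) @ \oo --> `|c| by exact: cvg_unique cc c0.
apply: cvg_near_cst; near=> n.
rewrite sumr_const card_ord -[`|c| *+ _]mulr_natl mulrA mulVf ?mul1r // pnatr_eq0 -lt0n.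
by near: n; exists 1%N.
Unshelve. all: by end_near.
Qed.

End WeightedMeans.

Arguments wdirac {R}.
Arguments wcesaro {R}.
Arguments subprob_wdirac {R}.
Arguments subprob_wcesaro {R}.

Lemma ler_normB_bound (R : realDomainType) (a b c : R) :
  0 <= a <= c -> 0 <= b <= c -> `|a - b| <= c.
Proof. by move=> /andP[a0 ac] /andP[b0 bc]; rewrite ler_norml; apply/andP; split; lra. Qed.

Section FineProbability.
Context (R : realType) d (T : measurableType d) (Q : probability T R).
Implicit Types E F : set T.

Lemma fine_probK E : measurable E -> (fine (Q E))%:E = Q E.
Proof. by move=> mE; rewrite fineK // fin_num_measure. Qed.

Lemma fine_prob_ge0 E : 0 <= fine (Q E).
Proof. by rewrite fine_ge0. Qed.

Lemma fine_prob_le1 E : measurable E -> fine (Q E) <= 1.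
Proof. by move=> mE; rewrite -lee_fin fine_probK // probability_le1. Qed.

Lemma fine_prob_norm_le1 E : measurable E -> `|fine (Q E)| <= 1.
Proof. by move=> mE; rewrite ger0_norm ?fine_prob_ge0 ?fine_prob_le1. Qed.

Lemma le_fine_prob E F : measurable E -> measurable F -> E `<=` F ->
  fine (Q E) <= fine (Q F).
Proof. by move=> mE mF EF; rewrite -lee_fin !fine_probK // le_measure ?inE. Qed.

Lemma fine_probD E F : measurable E -> measurable F -> F `<=` E ->
  fine (Q (E `\` F)) = fine (Q E) - fine (Q F).
Proof.
move=> mE mF FE; rewrite measureD ?setIidr ?fineB ?fin_num_measure //.
by rewrite -ge0_fin_numE ?fin_num_measure.
Qed.

End FineProbability.

Definition mixing_defect d (T : measurableType d) (R : realType)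
    (Q : probability T R) (g : nat -> T -> T) (A B : set T) (n : nat) : R :=
  fine (Q (A `&` g n @^-1` B)) - fine (Q A) * fine (Q B).

Definition wmixing_along (R : realType) (w : nat -> nat -> R) d
    (T : measurableType d) (Q : probability T R) (g : nat -> T -> T) :=
  forall A B, measurable A -> measurable B -> wnull w (mixing_defect Q g A B).

Section MixingNotions.
Context (R : realType) d (T : measurableType d) (Q : probability T R).

Lemma weakly_mixing_alongE (K : Type) (theta : K -> T -> T) (ks : nat -> K) :
  weakly_mixing_along Q theta ks <-> wmixing_along wcesaro Q (fun n => theta (ks n)).
Proof.
split=> h A B mA mB; first by apply/wnull_cesaroP; exact: h.
by have /wnull_cesaroP := h A B mA mB.
Qed.

Lemma weakly_mixingE (f : T -> T) :
  weakly_mixing Q f <-> wmixing_along wcesaro Q (fun n => iter n f).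
Proof. exact: (weakly_mixing_alongE (fun n => iter n f) id). Qed.

Lemma strongly_mixingE (f : T -> T) :
  strongly_mixing Q f <-> wmixing_along wdirac Q (fun n => iter n f).
Proof.
split=> h A B mA mB; first by apply/wnull_diracP; exact: (h A B mA mB).
by have /wnull_diracP := h A B mA mB.
Qed.

Lemma strongly_mixing_family_along (K : Type) (norm : K -> nat) (theta : K -> T -> T)
    (ks : nat -> K) : strongly_mixing_family norm Q theta ->
  (forall N, exists n0, forall n, (n0 <= n)%N -> (N <= norm (ks n))%N) ->
  wmixing_along wdirac Q (fun n => theta (ks n)).
Proof.
move=> mixing diverge A B mA mB; apply/wnull_diracP/cvgrPdist_le => e e0.
have [N HN] := mixing A B mA mB e e0; have [n0 Hn0] := diverge N.
by exists n0 => // n /Hn0 /HN; rewrite distrC => /ltW.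
Qed.

End MixingNotions.

Section WnullFromRectangles.
Context (R : realType) d1 d2 (T1 : measurableType d1) (T2 : measurableType d2).
Variables (Q : probability (T1 * T2)%type R) (w : nat -> nat -> R).
Hypothesis hw : subprob_weights w.
Variable X : set (T1 * T2) -> nat -> R.
Hypothesis X_le : forall E, measurable E -> forall n, `|X E n| <= fine (Q E).
Hypothesis XD : forall E F, measurable E -> measurable F -> F `<=` E ->
  forall n, X (E `\` F) n = X E n - X F n.
Hypothesis X_rect : forall A B, measurable A -> measurable B -> wnull w (X (A `*` B)).

Let good := [set E | measurable E /\ wnull w (X E)].

Let good_bigcup (F : (set (T1 * T2))^nat) : nondecreasing_seq F ->
  (forall n, good (F n)) -> good (\bigcup_n F n).
Proof.
move=> ndF gF; have mF n := (gF n).1.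
have mU : measurable (\bigcup_n F n) by exact: bigcupT_measurable.
split=> //; apply: (wnull_approx hw) => e e0.
have : fine (Q (F n)) @[n --> \oo] --> fine (Q (\bigcup_n F n)).
  by apply: fine_cvg; rewrite fine_probK //; exact: nondecreasing_cvg_mu.
move=> /cvgrPdist_le /(_ _ e0) [N _ /(_ N (leqnn N)) QN].
have FN_U : F N `<=` \bigcup_n F n by move=> x FNx; exists N.
exists (X (F N)) => [|i]; first exact: (gF N).2.
rewrite -[X _ i](subrK (X (F N) i)) -XD // addrC.
apply: le_trans (ler_normD _ _) _; rewrite lerD2l.
apply: le_trans (X_le (measurableD mU (mF N)) i) _.
by rewrite fine_probD //; apply: le_trans QN; exact: ler_norm.
Qed.

Lemma wnull_measurable_of_rect E : measurable E -> wnull w (X E).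
Proof.
pose rects := [set A `*` B | A in @measurable _ T1 & B in @measurable _ T2].
have rectsI : setI_closed rects.
  move=> _ _ [A1 mA1 [B1 mB1 <-]] [A2 mA2 [B2 mB2 <-]]; rewrite -setXI.
  by exists (A1 `&` A2); [exact: measurableI|exists (B1 `&` B2)=> //; exact: measurableI].
have rects_good : rects `<=` good.
  by move=> _ [A mA [B mB <-]]; split; [exact: measurableX|exact: X_rect].
have lambda_good : lambda_system setT good.
  split=> [//|||].
  - by split; [exact: measurableT|rewrite -setXTT; exact: X_rect].
  - move=> A B BA [mA wA] [mB wB]; split; first exact: measurableD.
    have -> : X (A `\` B) = fun n => X A n - X B n by apply/funext; exact: XD.
    by have := wnullD hw wA (wnullN hw wB).
  - exact: good_bigcup.
have sigma_good := lambda_system_subset rectsI lambda_good rects_good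
  (fun _ _ => @subsetT _ _).
move=> mE; have : <<s rects >> E by rewrite -measurable_prod_measurableType.
by move=> /sigma_good [].
Qed.

End WnullFromRectangles.

Lemma measure_preserving_iter d (T : measurableType d) (R : realType)
  (Q : probability T R) (f : T -> T) n :
  measure_preserving Q f -> measure_preserving Q (iter n f).
Proof.
case=> mf Qf; elim: n => [|n [mfn Qfn]]; first by split=> //; exact: measurable_id.
split=> [|A mA]; first exact: measurableT_comp.
have -> : iter n.+1 f @^-1` A = iter n f @^-1` (f @^-1` A) by [].
by rewrite Qfn ?Qf // -[_ @^-1` _]setTI; exact: mf.
Qed.

Lemma preimage_iter_invariant (T : Type) (f : T -> T) (A : set T) n :
  f @^-1` A = A -> iter n f @^-1` A = A.
Proof.
move=> fA; elim: n => // n IH.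
by have -> : iter n.+1 f @^-1` A = iter n f @^-1` (f @^-1` A) by []; rewrite fA.
Qed.

Section ProbabilityIntegrals.
Context (R : realType) dM (M : measurableType dM) dO (Omega : measurableType dO).
Variables (mu : probability M R) (P : probability Omega R).

Lemma measurable_fine_section (E : set (M * Omega)) : measurable E ->
  measurable_fun setT (fun t => fine (P (xsection E t))).
Proof.
move=> mE; change (measurable_fun setT (fine \o (P \o xsection E))).
exact: measurableT_comp (measurable_fun_xsection P mE).
Qed.

Lemma integrable_bounded (f : M -> R) c : measurable_fun setT f ->
  (forall t, `|f t| <= c) -> mu.-integrable setT (EFin \o f).
Proof.
move=> mf fc; apply: le_integrable (finite_measure_integrable_cst mu c measurableT) => //.
- exact/measurable_EFinP.
- by move=> t _ /=; rewrite lee_fin (ger0_norm (le_trans (normr_ge0 _) (fc t))).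
Qed.

Lemma Rintegral_indic (E : set M) : measurable E -> \int[mu]_t (\1_E t : R) = fine (mu E).
Proof. by move=> mE; rewrite /Rintegral integral_indic // setIT. Qed.

Lemma Rintegral_sum (I : Type) (s : seq I) (f : I -> M -> R) :
  (forall i, mu.-integrable setT (EFin \o f i)) ->
  \int[mu]_t (\sum_(i <- s) f i t) = \sum_(i <- s) \int[mu]_t f i t.
Proof.
move=> intf; rewrite /Rintegral; under eq_integral do rewrite -sumEFin.
rewrite integral_sum // -EFin_sum_fine // => i _.
by have := integrable_fin_num measurableT (intf i).
Qed.

Lemma Rintegral_measure_preserving (g : M -> M) (f : M -> R) :
  measure_preserving mu g -> measurable_fun setT f -> (forall t, 0 <= f t) ->
  \int[mu]_t f (g t) = \int[mu]_t f t.
Proof.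
move=> [mg mug] mf f0; rewrite /Rintegral; congr fine.
have := ge0_integral_pushforward mg mu (D := setT) (f := EFin \o f) measurableT.
rewrite preimage_setT => <- //.
- by apply: eq_measure_integral => A mA _; exact: mug.
- exact/measurable_EFinP.
- by move=> y _; rewrite lee_fin.
Qed.

Lemma product_probability_Rintegral (E : set (M * Omega)) : measurable E ->
  fine ((mu \x P)%E E) = \int[mu]_t fine (P (xsection E t)).
Proof.
move=> mE; rewrite /product_measure1 /Rintegral; congr fine.
by apply: eq_integral => t _; rewrite /= fine_probK //; exact: measurable_xsection.
Qed.

Lemma product_probabilityX (C : set M) (D : set Omega) : measurable C -> measurable D ->
  fine ((mu \x P)%E (C `*` D)) = fine (mu C) * fine (P D).
Proof. by move=> mC mD; rewrite product_measure1E // fineM // fin_num_measure. Qed.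

Lemma wnull_Rintegral (w : nat -> nat -> R) (f : nat -> M -> R) :
  subprob_weights w -> (forall n, measurable_fun setT (f n)) ->
  (forall n t, `|f n t| <= 1) -> {ae mu, forall t, wnull w (fun n => f n t)} ->
  wnull w (fun n => \int[mu]_t `|f n t|).
Proof.
move=> hw mf f_le1 f_null; pose h n t := wmean w (fun i => `|f i t|) n.
have mabs i : measurable_fun setT (fun t => `|f i t|).
  change (measurable_fun setT (Num.norm \o f i)).
  by apply: measurableT_comp; [exact: normr_measurable|exact: mf].
have h01 n t : 0 <= h n t <= 1.
  rewrite wmean_ge0 //= (le_trans _ (wmean_cst_le hw n ler01)) //.
  by apply: wmean_le => // i; exact: f_le1.
have mh n : measurable_fun setT (EFin \o h n).
  by apply/measurable_EFinP; apply: measurable_sum => i; exact: measurable_funM.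
have int_h n : \int[mu]_t h n t = wmean w (fun i => `|\int[mu]_t `|f i t| |) n.
  rewrite Rintegral_sum => [|i]; last first.
    apply: (integrable_bounded (c := w n i)); first exact: measurable_funM.
    by move=> t; rewrite normrM normr_id ger0_norm ?hw.1 // ler_piMr ?hw.1.
  apply: eq_bigr => i _; rewrite RintegralZl ?ger0_norm ?Rintegral_ge0 //.
  by apply: (integrable_bounded (c := 1)) => // t; rewrite normr_id.
rewrite /wnull; under eq_fun do rewrite -int_h.
have h_cvg : {ae mu, forall t, setT t -> (EFin \o h n) t @[n --> \oo] --> 0%E}.
  by apply: filterS f_null => t t_null _; apply: cvg_EFin; [near=> n|].
have h_le1 : {ae mu, forall t n, setT t -> (`|(EFin \o h n) t| <= cst 1%E t)%E}.
  by apply: aeW => t n _ /=; rewrite lee_fin ger0_norm; have /andP[] := h01 n t.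
have [_ _] := dominated_convergence measurableT mh (measurable_cst _) h_cvg
  (finite_measure_integrable_cst mu 1 measurableT) h_le1.
by rewrite integral0 => /fine_cvg.
Unshelve. all: by end_near.
Qed.

Lemma measurable_gt0 (f : M -> R) : measurable_fun setT f ->
  measurable [set t | 0 < f t].
Proof.
move=> mf; have -> : [set t | 0 < f t] = f @^-1` `]0, +oo[.
  by apply/seteqP; split=> t; rewrite /= in_itv andbT.
by rewrite -[X in measurable X]setTI; exact: mf.
Qed.

Lemma ae_indic_of_Rintegral_sq (f : M -> R) : measurable_fun setT f ->
  (forall t, 0 <= f t <= 1) -> \int[mu]_t (f t * f t) = \int[mu]_t f t ->
  ae_eq mu setT (EFin \o f) (EFin \o (\1_[set t | 0 < f t] : M -> R)).
Proof.
move=> mf f01 f2f; set E := [set t | 0 < f t].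
have f_le1 t : `|f t| <= 1 by have /andP[f0 f1] := f01 t; rewrite ger0_norm.
have intf := integrable_bounded mf f_le1.
have intf2 : mu.-integrable setT (EFin \o (fun t => f t * f t)).
  apply: (integrable_bounded (c := 1) (measurable_funM mf mf)) => t.
  by rewrite normrM -[1]mulr1 ler_pM.
pose g t := f t - f t * f t.
have mg : measurable_fun setT (EFin \o g).
  by apply/measurable_EFinP/measurable_funB => //; exact: measurable_funM.
have g0 t : 0 <= g t by have /andP[f0 f1] := f01 t; rewrite subr_ge0 ler_piMr.
have ig : mu.-integrable setT (EFin \o g).
  apply: (integrable_bounded (c := 1)); first exact/measurable_EFinP.
  move=> t; have /andP[f0 f1] := f01 t; rewrite ger0_norm // lerBlDr.
  by rewrite (le_trans f1) // lerDl mulr_ge0.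
have : (\int[mu]_t `|(g t)%:E| = 0)%E.
  under eq_integral do rewrite gee0_abs ?lee_fin //.
  have -> : (\int[mu]_t (g t)%:E)%E = (\int[mu]_t g t)%:E.
    by rewrite /Rintegral fineK //; have := integrable_fin_num measurableT ig.
  by rewrite RintegralB // f2f subrr.
move=> /(ae_eq_integral_abs mu measurableT mg).
apply: filterS => t /(_ I) [gt0] _; congr (_%:E).
have : f t * (1 - f t) = 0 by rewrite mulrBr mulr1; exact: gt0.
move/eqP; rewrite mulf_eq0 subr_eq0 indicE => /orP[/eqP ft0|/eqP ft1].
  by rewrite memNset /E /= ft0 ?ltxx.
by rewrite mem_set /E /= -ft1 ?ltr01.
Qed.

Lemma Rintegral_eq_measure_pos (f : M -> R) : measurable_fun setT f ->
  (forall t, 0 <= f t <= 1) -> \int[mu]_t (f t * f t) = \int[mu]_t f t ->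
  \int[mu]_t f t = fine (mu [set t | 0 < f t]).
Proof.
move=> mf f01 f2f; rewrite -(Rintegral_indic (measurable_gt0 mf)) /Rintegral.
congr fine; apply: ae_eq_integral => //.
- exact/measurable_EFinP.
- exact/measurable_EFinP/measurable_indic/measurable_gt0.
- exact: ae_indic_of_Rintegral_sq.
Qed.

End ProbabilityIntegrals.

Section SkewProduct.
Context (R : realType) (K : nmodType) (K_countable : countable [set: K]).
Context dO (Omega : measurableType dO) (P : probability Omega R).
Context (theta : K -> Omega -> Omega).
Context dM (M : measurableType dM) (mu : probability M R).
Context (tau : M -> M) (kappa : M -> K).
Hypothesis theta_mp : mp_semigroup P theta.
Hypothesis tau_mp : measure_preserving mu tau.
Hypothesis kappa_meas : measurable_discrete kappa.

Local Notation kn := (kappa_n tau kappa).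
Local Notation S := (skew_product tau kappa theta).
Local Notation Pbar := (mu \x P)%E.

Lemma iter_skew_product n x : iter n S x = (iter n tau x.1, theta (kn n x.1) x.2).
Proof.
have [_ [theta0 thetaD]] := theta_mp; case: x => t w.
elim: n => [|n /= ->]; first by rewrite /kappa_n big_ord0 theta0.
by rewrite /skew_product /kappa_n big_ord_recr /= addrC -thetaD.
Qed.

Lemma xsection_preimage_iter_skew n B t :
  xsection (iter n S @^-1` B) t = theta (kn n t) @^-1` xsection B (iter n tau t).
Proof.
by apply/seteqP; split=> w; rewrite /xsection /preimage /= !inE /= iter_skew_product.
Qed.

Lemma fine_prob_xsection_preimage_iter_skew n B t : measurable B ->
  fine (P (xsection (iter n S @^-1` B) t)) = fine (P (xsection B (iter n tau t))).
Proof.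
move=> mB; have [/(_ (kn n t)) [_ thetaP] _] := theta_mp.
by rewrite xsection_preimage_iter_skew thetaP //; exact: measurable_xsection.
Qed.

Lemma measurable_skew_product : measurable_fun setT S.
Proof.
have [mtau _] := tau_mp; apply: measurable_fun_pair.
  exact: measurableT_comp mtau measurable_fst.
move=> _ D mD; rewrite setTI.
have -> : (fun x => theta (kappa x.1) x.2) @^-1` D =
    \bigcup_k (kappa @^-1` [set k] `*` theta k @^-1` D).
  by apply/seteqP; split=> [[t w] /= Dw|[t w] [k _ [/= <- //]]]; exists (kappa t).
apply: countable_bigcupT_measurable => // k; apply: measurableX => //.
by have [/(_ k) [mth _] _] := theta_mp; rewrite -[_ @^-1` _]setTI; exact: mth.
Qed.

Lemma skew_product_mp : measure_preserving Pbar S.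
Proof.
split=> [|B mB]; first exact: measurable_skew_product.
have mSB : measurable (S @^-1` B).
  by rewrite -[_ @^-1` _]setTI; exact: measurable_skew_product.
rewrite -(fine_probK _ mSB) -(fine_probK _ mB) !product_probability_Rintegral //.
congr (_%:E).
rewrite -(Rintegral_measure_preserving tau_mp (measurable_fine_section P mB));
  last by move=> t; exact: fine_prob_ge0.
by apply: eq_Rintegral => t _; exact: (fine_prob_xsection_preimage_iter_skew 1 t mB).
Qed.

Lemma measurable_preimage_iter_skew n B : measurable B -> measurable (iter n S @^-1` B).
Proof.
have [miter _] := measure_preserving_iter n skew_product_mp.
by move=> mB; rewrite -[_ @^-1` _]setTI; exact: miter.
Qed.

Definition skew_joint n (A B : set (M * Omega)) := fine (Pbar (A `&` iter n S @^-1` B)).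

Lemma measurable_skew_joint n A B : measurable A -> measurable B ->
  measurable (A `&` iter n S @^-1` B).
Proof. by move=> mA mB; apply: measurableI => //; exact: measurable_preimage_iter_skew. Qed.

Lemma skew_joint_le_l n A B : measurable A -> measurable B ->
  skew_joint n A B <= fine (Pbar A).
Proof.
by move=> mA mB; apply: le_fine_prob (measurable_skew_joint n mA mB) mA _; exact: subIsetl.
Qed.

Lemma skew_joint_le_r n A B : measurable A -> measurable B ->
  skew_joint n A B <= fine (Pbar B).
Proof.
have [_ Sn_mp] := measure_preserving_iter n skew_product_mp.
move=> mA mB; rewrite -Sn_mp //.
apply: le_fine_prob (measurable_skew_joint n mA mB) (measurable_preimage_iter_skew n mB) _.
exact: subIsetr.
Qed.

Lemma skew_joint_setDl n A A' B : measurable A -> measurable A' -> measurable B ->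
  A' `<=` A ->  skew_joint n (A `\` A') B = skew_joint n A B - skew_joint n A' B.
Proof.
move=> mA mA' mB A'A.
have sub : A' `&` iter n S @^-1` B `<=` A `&` iter n S @^-1` B.
  by move=> x [A'x Bx]; split=> //; exact: A'A.
have mJ := measurable_skew_joint n mA mB; have mJ' := measurable_skew_joint n mA' mB.
rewrite /skew_joint -(fine_probD _ mJ mJ' sub).
congr (fine (Pbar _)); apply/seteqP; split=> x /=.
  by move=> [[? ?] ?]; split=> // -[].
by move=> [[Ax Bx] nA'B]; split=> //; split=> // A'x; exact: nA'B.
Qed.

Lemma skew_joint_setDr n A B B' : measurable A -> measurable B -> measurable B' ->
  B' `<=` B ->  skew_joint n A (B `\` B') = skew_joint n A B - skew_joint n A B'.
Proof.
move=> mA mB mB' B'B.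
have sub : A `&` iter n S @^-1` B' `<=` A `&` iter n S @^-1` B.
  by move=> x [Ax B'x]; split=> //; exact: B'B.
have mJ := measurable_skew_joint n mA mB; have mJ' := measurable_skew_joint n mA mB'.
rewrite /skew_joint -(fine_probD _ mJ mJ' sub).
congr (fine (Pbar _)); apply/seteqP; split=> x /=.
  by move=> [? [? ?]]; split=> // -[].
by move=> [[Ax Bx] nAB']; split=> //; split=> // B'x; exact: nAB'.
Qed.

Lemma xsection_skew_joint n A B t : xsection (A `&` iter n S @^-1` B) t =
  xsection A t `&` theta (kn n t) @^-1` xsection B (iter n tau t).
Proof. by rewrite xsectionI xsection_preimage_iter_skew. Qed.

Lemma xsectionX_indic (phi : set Omega -> R) (C : set M) (D : set Omega) s :
  phi set0 = 0 -> phi (xsection (C `*` D) s) = \1_C s * phi D.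
Proof.
move=> phi0; rewrite indicE; case: (boolP (s \in C)) => Cs.
  by rewrite in_xsectionX // mul1r.
by rewrite notin_xsectionX // mul0r.
Qed.

Lemma measurable_fine_section_iter n B : measurable B ->
  measurable_fun setT (fun t => fine (P (xsection B (iter n tau t)))).
Proof.
move=> mB; have [miter _] := measure_preserving_iter n tau_mp.
exact: measurableT_comp (measurable_fine_section P mB) miter.
Qed.

Lemma measurable_fine_theta_section n A D : measurable A -> measurable D ->
  measurable_fun setT (fun t => fine (P (xsection A t `&` theta (kn n t) @^-1` D))).
Proof.
move=> mA mD; have mAD := measurable_skew_joint n mA (measurableX measurableT mD).
apply: eq_measurable_fun (measurable_fine_section P mAD) => t _.
by rewrite xsection_skew_joint in_xsectionX ?in_setT.
Qed.

Definition fiber_corr n A B :=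
  \int[mu]_t (fine (P (xsection A t)) * fine (P (xsection B (iter n tau t)))).

Lemma integrable_fiber_corr n A B : measurable A -> measurable B ->
  mu.-integrable setT
    (EFin \o (fun t => fine (P (xsection A t)) * fine (P (xsection B (iter n tau t))))).
Proof.
move=> mA mB; apply: (integrable_bounded mu (c := 1)).
  exact: measurable_funM (measurable_fine_section P mA) (measurable_fine_section_iter n mB).
move=> t; rewrite normrM -[1]mulr1 ler_pM ?fine_prob_norm_le1 //.
all: exact: measurable_xsection.
Qed.

Lemma fiber_corr_setDr n A B B' : measurable A -> measurable B -> measurable B' ->
  B' `<=` B -> fiber_corr n A (B `\` B') = fiber_corr n A B - fiber_corr n A B'.
Proof.
move=> mA mB mB' B'B; rewrite /fiber_corr -RintegralB ?integrable_fiber_corr //.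
apply: eq_Rintegral => t _; rewrite xsectionD fine_probD ?mulrBr //.
  1,2: exact: measurable_xsection.
by move=> y; rewrite /xsection /= !inE; exact: B'B.
Qed.

Lemma fiber_corr_ge0 n A B : 0 <= fiber_corr n A B.
Proof. by apply: Rintegral_ge0 => t _; rewrite mulr_ge0 ?fine_prob_ge0. Qed.

Lemma fiber_corr_le_r n A B : measurable A -> measurable B ->
  fiber_corr n A B <= fine (Pbar B).
Proof.
move=> mA mB; rewrite product_probability_Rintegral //.
rewrite -(Rintegral_measure_preserving (measure_preserving_iter n tau_mp)
  (measurable_fine_section P mB)); last by move=> t; exact: fine_prob_ge0.
apply: le_Rintegral => //; first exact: integrable_fiber_corr.
  apply: (integrable_bounded mu (c := 1)); first exact: measurable_fine_section_iter.
  by move=> t; rewrite fine_prob_norm_le1 //; apply: measurable_xsection.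
move=> t _; rewrite ler_piMl ?fine_prob_ge0 ?fine_prob_le1 //.
exact: measurable_xsection.
Qed.

Local Notation skew_defect := (mixing_defect Pbar (fun n => iter n S)).
Local Notation theta_defect t := (mixing_defect P (fun k => theta (kn k t))).

Lemma skew_defect_setDl n A A' B : measurable A -> measurable A' -> measurable B ->
  A' `<=` A -> skew_defect (A `\` A') B n = skew_defect A B n - skew_defect A' B n.
Proof.
move=> mA mA' mB A'A; have := skew_joint_setDl n mA mA' mB A'A.
by rewrite /mixing_defect /skew_joint => ->; rewrite fine_probD //; ring.
Qed.

Lemma skew_defect_setDr n A B B' : measurable A -> measurable B -> measurable B' ->
  B' `<=` B -> skew_defect A (B `\` B') n = skew_defect A B n - skew_defect A B' n.
Proof.
move=> mA mB mB' B'B; have := skew_joint_setDr n mA mB mB' B'B.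
by rewrite /mixing_defect /skew_joint => ->; rewrite fine_probD //; ring.
Qed.

Lemma skew_defect_le_l n A B : measurable A -> measurable B ->
  `|skew_defect A B n| <= fine (Pbar A).
Proof.
move=> mA mB; apply: ler_normB_bound; rewrite ?fine_prob_ge0 ?(skew_joint_le_l n) //=.
by rewrite mulr_ge0 ?fine_prob_ge0 ?ler_piMr ?fine_prob_ge0 ?fine_prob_le1.
Qed.

Lemma skew_defect_le_r n A B : measurable A -> measurable B ->
  `|skew_defect A B n| <= fine (Pbar B).
Proof.
move=> mA mB; apply: ler_normB_bound; rewrite ?fine_prob_ge0 ?(skew_joint_le_r n) //=.
by rewrite mulr_ge0 ?fine_prob_ge0 ?ler_piMl ?fine_prob_ge0 ?fine_prob_le1.
Qed.

Definition fiber_defect n A B := skew_joint n A B - fiber_corr n A B.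

Lemma fiber_defect_setDr n A B B' : measurable A -> measurable B -> measurable B' ->
  B' `<=` B -> fiber_defect n A (B `\` B') = fiber_defect n A B - fiber_defect n A B'.
Proof.
by move=> mA mB mB' B'B; rewrite /fiber_defect skew_joint_setDr ?fiber_corr_setDr //; ring.
Qed.

Lemma fiber_defect_le_r n A B : measurable A -> measurable B ->
  `|fiber_defect n A B| <= fine (Pbar B).
Proof.
move=> mA mB; apply: ler_normB_bound.
  by rewrite /skew_joint fine_prob_ge0 skew_joint_le_r.
by rewrite fiber_corr_ge0 fiber_corr_le_r.
Qed.

Lemma theta_defect_le1 t F D n : measurable F -> measurable D ->
  `|theta_defect t F D n| <= 1.
Proof.
move=> mF mD; apply: ler_normB_bound; rewrite ?fine_prob_ge0 ?fine_prob_le1 //=.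
  have [/(_ (kn n t)) [mth _] _] := theta_mp.
  by apply: measurableI => //; rewrite -[_ @^-1` _]setTI; exact: mth.
by rewrite mulr_ge0 ?fine_prob_ge0 // -[1]mulr1 ler_pM ?fine_prob_ge0 ?fine_prob_le1.
Qed.

Lemma fiber_defectX n A C D : measurable A -> measurable C -> measurable D ->
  fiber_defect n A (C `*` D) =
  \int[mu]_t (\1_C (iter n tau t) * theta_defect t (xsection A t) D n).
Proof.
move=> mA mC mD; have mCD := measurableX mC mD.
have mJ := measurable_skew_joint n mA mCD.
rewrite /fiber_defect /skew_joint product_probability_Rintegral //.
rewrite /fiber_corr -RintegralB //.
- apply: eq_Rintegral => t _; rewrite xsection_skew_joint /mixing_defect.
  rewrite (xsectionX_indic
    (phi := fun E => fine (P (xsection A t `&` theta (kn n t) @^-1` E)))).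
    by rewrite (xsectionX_indic (phi := fun E => fine (P E))) ?measure0 //; ring.
  by rewrite preimage_set0 setI0 measure0.
- apply: (integrable_bounded mu (c := 1)); first exact: measurable_fine_section.
  by move=> t; apply: fine_prob_norm_le1; exact: measurable_xsection.
- exact: integrable_fiber_corr.
Qed.

Lemma measurable_theta_defect n A D : measurable A -> measurable D ->
  measurable_fun setT (fun t => theta_defect t (xsection A t) D n).
Proof.
move=> mA mD; apply: measurable_funB; first exact: measurable_fine_theta_section.
exact: measurable_funM (measurable_fine_section P mA) (measurable_cst _).
Qed.

Lemma norm_fiber_defectX_le n A C D : measurable A -> measurable C -> measurable D ->
  `|fiber_defect n A (C `*` D)| <= \int[mu]_t `|theta_defect t (xsection A t) D n|.
Proof.
move=> mA mC mD; have [miter _] := measure_preserving_iter n tau_mp.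
have indic_le1 s : `|(\1_C s : R)| <= 1.
  by rewrite indicE; case: (s \in C); rewrite ?normr1 ?normr0.
have th_le1 t := theta_defect_le1 t n (measurable_xsection t mA) mD.
have int_th := integrable_bounded mu (measurable_theta_defect n mA mD) th_le1.
have int_prod : mu.-integrable setT
    (EFin \o (fun t => \1_C (iter n tau t) * theta_defect t (xsection A t) D n)).
  apply: (integrable_bounded mu (c := 1)).
    exact: measurable_funM (measurableT_comp (measurable_indic mC) miter)
      (measurable_theta_defect n mA mD).
  by move=> t; rewrite normrM -[1]mulr1 ler_pM.
rewrite fiber_defectX //; apply: le_trans (le_normr_Rintegral _ _) _ => //.
apply: le_Rintegral; rewrite ?integrable_norm //.
by move=> t _; rewrite normrM ler_piMl.
Qed.

Lemma skew_defectXX n C1 D1 C D : measurable C1 -> measurable D1 ->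
  measurable C -> measurable D ->
  skew_defect (C1 `*` D1) (C `*` D) n = fiber_defect n (C1 `*` D1) (C `*` D) +
    fine (P D1) * fine (P D) * mixing_defect mu (fun k => iter k tau) C1 C n.
Proof.
move=> mC1 mD1 mC mD; have [miter _] := measure_preserving_iter n tau_mp.
have mC1C : measurable (C1 `&` iter n tau @^-1` C).
  by apply: measurableI => //; rewrite -[_ @^-1` _]setTI; exact: miter.
have corr : fiber_corr n (C1 `*` D1) (C `*` D) =
    fine (P D1) * fine (P D) * fine (mu (C1 `&` iter n tau @^-1` C)).
  rewrite -(Rintegral_indic mu mC1C) -RintegralZl //; last first.
    apply: (integrable_bounded mu (c := 1)); first exact: measurable_indic.
    by move=> t; rewrite indicE; case: (t \in _); rewrite ?normr1 ?normr0.
  apply: eq_Rintegral => t _; rewrite indicI.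
  rewrite !(xsectionX_indic (phi := fun E : set Omega => fine (P E))) ?measure0 //.
  by rewrite /= !indicE /=; ring.
rewrite /mixing_defect /fiber_defect /skew_joint corr !product_probabilityX //; ring.
Qed.

Section FiberMixing.
Variable w : nat -> nat -> R.
Hypothesis hw : subprob_weights w.
Hypothesis fiber_mixing : {ae mu, forall t, wmixing_along w P (fun n => theta (kn n t))}.

Lemma wnull_fiber_defect A B : measurable A -> measurable B ->
  wnull w (fun n => fiber_defect n A B).
Proof.
move=> mA; apply: (wnull_measurable_of_rect hw (X := fun B n => fiber_defect n A B)).
- by move=> E mE n; exact: fiber_defect_le_r.
- by move=> E F mE mF FE n; exact: fiber_defect_setDr.
move=> C D mC mD /=.
have theta_null : wnull w (fun n => \int[mu]_t `|theta_defect t (xsection A t) D n|).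
  apply: (wnull_Rintegral (mu := mu) hw
    (f := fun n t => theta_defect t (xsection A t) D n)).
  - by move=> n; exact: measurable_theta_defect.
  - by move=> n t; exact: theta_defect_le1 (measurable_xsection t mA) mD.
  - apply: filterS fiber_mixing => t t_mix.
    exact: t_mix _ _ (measurable_xsection t mA) mD.
refine (wnull_le hw _ theta_null) => n.
by rewrite [leRHS]ger0_norm ?Rintegral_ge0 //; exact: norm_fiber_defectX_le.
Qed.

Hypothesis tau_mixing : wmixing_along w mu (fun n => iter n tau).

Theorem skew_product_wmixing : wmixing_along w Pbar (fun n => iter n S).
Proof.
have rectl C1 D1 : measurable C1 -> measurable D1 -> forall B, measurable B ->
    wnull w (skew_defect (C1 `*` D1) B).
  move=> mC1 mD1 B mB; have mA := measurableX mC1 mD1.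
  apply: (wnull_measurable_of_rect hw (X := skew_defect (C1 `*` D1))) => //.
  - by move=> E mE n; exact: skew_defect_le_r.
  - by move=> E F mE mF FE n; exact: skew_defect_setDr.
  move=> C D mC mD; have -> : skew_defect (C1 `*` D1) (C `*` D) = fun n =>
      fiber_defect n (C1 `*` D1) (C `*` D) +
      fine (P D1) * fine (P D) * mixing_defect mu (fun k => iter k tau) C1 C n.
    by apply/funext => n; exact: skew_defectXX.
  refine (wnullD hw (wnull_fiber_defect mA (measurableX mC mD)) _).
  refine (wnull_le hw _ (tau_mixing mC1 mC)) => n.
  rewrite normrM ler_piMl // normrM -[1]mulr1 ler_pM //; exact: fine_prob_norm_le1.
move=> A B mA mB.
apply: (wnull_measurable_of_rect hw (X := fun A => skew_defect A B)) => //.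
- by move=> E mE n; exact: skew_defect_le_l.
- by move=> E F mE mF FE n; exact: skew_defect_setDl.
- by move=> C D mC mD; exact: rectl.
Qed.

End FiberMixing.

Theorem skew_product_ergodic :
  {ae mu, forall t, wmixing_along wcesaro P (fun n => theta (kn n t))} ->
  ergodic mu tau -> ergodic Pbar S.
Proof.
move=> fiber_mixing tau_erg A mA SA; have SnA n := preimage_iter_invariant n SA.
pose a t := fine (P (xsection A t)); have ma : measurable_fun setT a.
  exact: measurable_fine_section.
have a01 t : 0 <= a t <= 1.
  by rewrite fine_prob_ge0 fine_prob_le1 //; exact: measurable_xsection.
have a_iter n t : a t = a (iter n tau t).
  by have := fine_prob_xsection_preimage_iter_skew n t mA; rewrite SnA.
have defect_cst n : fiber_defect n A A = fine (Pbar A) - \int[mu]_t (a t * a t).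
  rewrite /fiber_defect /skew_joint SnA setIid; congr (_ - _).
  by apply: eq_Rintegral => t _; exact (congr1 (fun x => a t * x) (esym (a_iter n t))).
have : wnull wcesaro (fun=> fine (Pbar A) - \int[mu]_t (a t * a t)).
  have := wnull_fiber_defect subprob_wcesaro fiber_mixing mA mA.
  by under eq_fun do rewrite defect_cst.
move=> /wnull_cesaro_cst /eqP; rewrite subr_eq0 product_probability_Rintegral //.
move=> /eqP/esym a2a.
rewrite -fine_probK // product_probability_Rintegral //.
rewrite (Rintegral_eq_measure_pos ma a01 a2a).
rewrite fine_probK; last exact: measurable_gt0.
apply: tau_erg; first exact: measurable_gt0.
by apply/seteqP; split=> t; rewrite /preimage /= [a t](a_iter 1).
Qed.

End SkewProduct.

Lemma countable_Kt p d : countable [set: Kt p d].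
Proof. by case: p; exact: countableP. Qed.

Theorem lemma2p2 (R : realType) (p : param) (d : nat)
  (dO : measure_display) (Omega : measurableType dO) (P : probability Omega R)
  (theta : Kt p d -> Omega -> Omega)
  (dM : measure_display) (M : measurableType dM) (mu : probability M R)
  (tau : M -> M) (kappa : M -> Kt p d) :
  mp_semigroup P theta ->
  measure_preserving mu tau ->
  measurable_discrete kappa ->
  let Sk := skew_product tau kappa theta in
  let C1 := {ae mu, forall t,
               weakly_mixing_along P theta (fun n => kappa_n tau kappa n t)} in
  let C2 := strongly_mixing_family (@knorm p d) P theta /\
            {ae mu, forall t, forall N : nat, exists n0 : nat, forall n : nat,
               (n0 <= n)%N -> (N <= knorm (kappa_n tau kappa n t))%N} in
  (C1 -> ergodic mu tau -> ergodic (mu \x P)%E Sk) /\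
  (C1 -> weakly_mixing mu tau -> weakly_mixing (mu \x P)%E Sk) /\
  (C2 -> strongly_mixing mu tau -> strongly_mixing (mu \x P)%E Sk).
Proof.
move=> theta_mp tau_mp kappa_meas Sk C1 C2.
have skew_wmixing := skew_product_wmixing (countable_Kt p d) theta_mp tau_mp kappa_meas.
have fiber_cesaro (c1 : C1) :
    {ae mu, forall t, wmixing_along wcesaro P (fun n => theta (kappa_n tau kappa n t))}.
  by apply: filterS c1 => t /weakly_mixing_alongE.
split; [|split].
- move=> /fiber_cesaro fiber_mixing.
  exact (skew_product_ergodic (countable_Kt p d) theta_mp tau_mp kappa_meas fiber_mixing).
- move=> /fiber_cesaro fiber_mixing /weakly_mixingE tau_mixing.
  exact/weakly_mixingE/(skew_wmixing _ subprob_wcesaro fiber_mixing tau_mixing).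
- move=> [theta_mixing diverge] /strongly_mixingE tau_mixing.
  apply/strongly_mixingE/(skew_wmixing _ subprob_wdirac _ tau_mixing).
  by apply: filterS diverge => t; exact: strongly_mixing_family_along theta_mixing.
Qed.
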